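(* Let $X$ be a finite set and $\mathcal{P}^1,\dots,\mathcal{P}^M$ partitions of $X$, with Multiscale Clustering Filtration $(K^m)_{m\le M}$ and Multiscale Clustering Nerve Filtration $(N^m)_{m\le M}$. Then for all integers $k\ge0$, $1\le m\le M$ and $p\ge0$ with $m+p\le M$, $H_k^p(N^m)\cong H_k^p(K^m)$.
   Context: A partition of $X$ is a collection of non-empty pairwise disjoint subsets (clusters) whose union is $X$; $\#\mathcal{P}$ is its number of clusters. For a finite non-empty set $C$, $\Delta C$ is the set of all non-empty subsets of $C$. The MCF is $K^m:=\bigcup_{l\le m}\bigcup_{C\in\mathcal{P}^l}\Delta C$. For $m\le M$ let $A(m)=\{(m',i): m'\le m,\ 1\le i\le\#\mathcal{P}^{m'}\}$ and let $C_{(m',i)}$ be the $i$-th cluster of $\mathcal{P}^{m'}$ (for a fixed enumeration of the clusters of each partition). The Multiscale Clustering Nerve $N^m$ is the nerve of the family $(C_\alpha)_{\alpha\in A(m)}$: the abstract simplicial complex on vertex set $A(m)$ whose simplices are the non-empty $S\subseteq A(m)$ with $\bigcap_{\alpha\in S}C_\alpha\neq\emptyset$; thus $N^m\subseteq N^{m+p}$. Homology is simplicial homology over a field, and $H_k^p(F^m)$ denotes the image of the map $H_k(F^m)\to H_k(F^{m+p})$ induced by inclusion, for $F=K$ or $F=N$. *)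

From HB Require Import structures.
From mathcomp Require Import all_boot all_order all_algebra.
Set Implicit Arguments. Unset Strict Implicit. Unset Printing Implicit Defensive.
Import GRing.Theory.
Local Open Scope ring_scope.

(* Chains live in the row space
   'rV[F]_#|{set V}| (coordinate of a simplex s is at index enum_rank s).
   Orientation: vertices are ordered by enum_rank. *)

Section Homology.
Variables (F : fieldType) (V : finType).

Local Notation N := #|{set V}|.

Definition face_sign (s : {set V}) (x : V) : F :=
  (-1) ^+ #|[set y in s | (enum_rank y < enum_rank x)%N]|.

(* coefficient of the face t in the boundary of s (unaugmented: t <> set0) *)
Definition bd_coef (s t : {set V}) : F :=
  if (t != set0) && (t \subset s) && (#|s :\: t| == 1)%N then
    match [pick x in s :\: t] with Some x => face_sign s x | None => 0 end
  else 0.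

Definition bdmx : 'M[F]_N := \matrix_(i, j) bd_coef (enum_val i) (enum_val j).

Definition chainmx (K : {set {set V}}) (k : nat) : 'M[F]_N :=
  \matrix_(i, j) ((i == j) && (enum_val i \in K) && (#|enum_val i| == k.+1)%N)%:R.

Definition cyclemx (K : {set {set V}}) (k : nat) : 'M[F]_N :=
  (chainmx K k :&: kermx bdmx)%MS.

Definition bdrymx (K : {set {set V}}) (k : nat) : 'M[F]_N :=
  (chainmx K k.+1 *m bdmx)%MS.

(* dimension of H_k^p: the image of H_k(K) -> H_k(L) (K a subcomplex of L),
   which is (Z_k(K) + B_k(L)) / B_k(L). *)
Definition pers_dim (K L : {set {set V}}) (k : nat) : nat :=
  (\rank (cyclemx K k + bdrymx L k)%MS - \rank (bdrymx L k))%N.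

End Homology.

(* ---------- Multiscale clustering filtration and nerve ----------
   Partitions P^1..P^M of X are P : 'I_M -> {set {set X}}, scale l (1-based)
   being P (l-1).  K^m uses scales l <= m, i.e. 0-based indices < m. *)

Definition MCF (X : finType) (M : nat) (P : 'I_M -> {set {set X}}) (m : nat)
  : {set {set X}} :=
  [set s : {set X} | (s != set0) &&
     [exists l : 'I_M, ((l < m)%N && [exists C in P l, s \subset C])]].

(* vertices of the nerve: pairs (scale, cluster), i.e. A(m) *)
Definition MCN (X : finType) (M : nat) (P : 'I_M -> {set {set X}}) (m : nat)
  : {set {set ('I_M * {set X})}} :=
  [set S : {set ('I_M * {set X})} | [&& S != set0,
     [forall a in S, ((a.1 < m)%N && (a.2 \in P a.1))] &
     [exists x : X, [forall a in S, x \in a.2]]]].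

(* K^m and N^m are the two Dowker complexes of the relation R_m = "x lies in the
   cluster (l, C), l < m": K^m on the points, N^m on the clusters.  Both are
   obtained from one complex J^m on points + clusters (the sets s + t such that
   s x t is inside R_m, the points of s have a common cluster and the clusters of
   t a common point) by deleting all cluster vertices, respectively all point
   vertices.  Deleting a class Y of vertices does not change persistent homology
   when every simplex U meeting Y can be coned off by an apex g (U :&: Y) outside
   Y (for clusters: a point lying in all of them; for points: a cluster
   containing all of them).  As the apex depends only on U :&: Y, the cone
   operator h makes 1 - (h d + d h), which is homotopic to the identity, lower
   the number of Y-vertices of every simplex meeting Y while fixing the simplices
   avoiding Y.  Iterating it shows that (J^m, J^m - Y) is relatively acyclic,
   which forces equal persistence ranks. *)

From HB Require Import structures.
From mathcomp Require Import all_boot all_order all_algebra.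
From mathcomp Require Import zify.

Set Implicit Arguments. Unset Strict Implicit. Unset Printing Implicit Defensive.
Import GRing.Theory.

Section SignedSums.
Local Open Scope ring_scope.

Lemma sum_offdiag_antisym (T : finType) (R : zmodType) (s : {set T}) (Q : rel T)
    (G : T -> T -> R) :
  symmetric Q -> {in s &, forall y z, y != z -> G y z = - G z y} ->
  \sum_(y in s) \sum_(z in s | (z != y) && Q y z) G y z = 0.
Proof.
(* Pair (y, z) with (z, y) along the order enum_rank; the shortcut "S = - S"
   would fail in characteristic 2. *)
move=> Qsym Ganti; pose r (y : T) : nat := enum_rank y.
have r_inj : injective r by move=> y z /ord_inj/enum_rank_inj.
have split_ne y : \sum_(z in s | (z != y) && Q y z) G y z =
    \sum_(z in s) (if (r z < r y)%N && Q y z then G y z else 0) +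
    \sum_(z in s) (if (r y < r z)%N && Q y z then G y z else 0).
  rewrite -big_split big_mkcondr /=; apply: eq_bigr => z _.
  case: (eqVneq z y) => [->|zy] /=; first by rewrite ltnn addr0.
  have : r z != r y by rewrite (inj_eq r_inj).
  by case: ltngtP => // _ _; rewrite ?addr0 ?add0r.
under eq_bigr => y _ do rewrite split_ne.
rewrite big_split /= [X in _ + X]exchange_big -big_split /=.
apply: big1 => y ys; rewrite -big_split /=; apply: big1 => z zs.
rewrite Qsym; case: ifP => [/andP[lt_zy _]|_]; last by rewrite addr0.
have zy : z != y by apply: contraTneq lt_zy => ->; rewrite ltnn.
by rewrite (Ganti _ _ zs ys zy) addrN.
Qed.

Lemma mulr_sign_sq (R : pzRingType) (n : nat) : (-1) ^+ n * (-1) ^+ n = 1 :> R.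
Proof. by rewrite -exprD addnn -mul2n exprM sqrrN !expr1n. Qed.

End SignedSums.

Section SetD1Facts.
Variable T : finType.
Implicit Types (U Y A B : {set T}) (x y : T).

Lemma setU1I_notin U Y x : x \notin Y -> (x |: U) :&: Y = U :&: Y.
Proof.
move=> xY; apply/setP => z; rewrite !inE.
by case: (eqVneq z x) => [->|] /=; rewrite ?(negbTE xY) ?andbF.
Qed.

Lemma setD1I_notin U Y y : y \notin Y -> (U :\ y) :&: Y = U :&: Y.
Proof.
move=> yY; apply/setP => z; rewrite !inE.
by case: (eqVneq z y) => [->|] /=; rewrite ?(negbTE yY) ?andbF.
Qed.

Lemma cardsD1_pred U y : y \in U -> #|U :\ y| = #|U|.-1.
Proof. by move=> yU; rewrite (cardsD1 y U) yU. Qed.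

Lemma setD1U1 U x y : x != y -> (x |: U) :\ y = x |: (U :\ y).
Proof.
move=> xy; apply/setP => z; rewrite !inE.
by case: (eqVneq z x) => [->|] /=; rewrite ?xy.
Qed.

Lemma subset_neq0 A B : A \subset B -> A != set0 -> B != set0.
Proof. by move=> AB /set0Pn[z zA]; apply/set0Pn; exists z; apply: subsetP AB z zA. Qed.

Lemma setD_setD1 (s : {set T}) y : y \in s -> s :\: (s :\ y) = [set y].
Proof. by move=> ys; rewrite setDDr setDv set0U (setIidPr _) // sub1set. Qed.

Lemma eq_setD1 (s t : {set T}) y : y \in s ->
  (t == s :\ y) = (t \subset s) && (s :\: t == [set y]).
Proof.
move=> ys; apply/eqP/andP => [->|[ts /eqP st]]; first by rewrite subD1set setD_setD1.
by rewrite -st setDDr setDv set0U (setIidPr ts).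
Qed.

End SetD1Facts.

Lemma enum_rank_index (T : finType) (x : T) : (enum_rank x : nat) = index x (enum T).
Proof.
rewrite /enum_rank enum_rank_in.unlock insubdK //.
by rewrite -topredE /= cardE index_mem mem_enum.
Qed.

Section SumEnumRank.
Variables T1 T2 : finType.

Lemma enum_sumE :
  enum {: T1 + T2} = [seq inl x | x <- enum T1] ++ [seq inr y | y <- enum T2].
Proof. by rewrite !enumT unlock /= /sum_enum unlock. Qed.

Lemma enum_rank_inl (x : T1) : (enum_rank (inl x : T1 + T2) : nat) = enum_rank x.
Proof.
rewrite !enum_rank_index enum_sumE index_cat map_f ?mem_enum //.
by rewrite index_map // => a b [].
Qed.

Lemma enum_rank_inr (y : T2) :
  (enum_rank (inr y : T1 + T2) : nat) = #|T1| + enum_rank y.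
Proof.
rewrite !enum_rank_index enum_sumE index_cat.
have -> : (inr y : T1 + T2) \in [seq inl x | x <- enum T1] = false.
  by apply/negbTE/mapP => -[].
by rewrite size_map -cardE index_map // => a b [].
Qed.

End SumEnumRank.

Section SimplicialChains.
Variables (F : fieldType) (V : finType).
Local Open Scope ring_scope.
Local Notation N := #|{set V}|.
Local Notation bd := (bdmx F V).
Local Notation sgn := (face_sign F).

Definition basis_chain (s : {set V}) : 'rV[F]_N := delta_mx 0 (enum_rank s).

Lemma basis_chainM s p (A : 'M[F]_(N, p)) : basis_chain s *m A = row (enum_rank s) A.
Proof. by rewrite rowE. Qed.

Lemma row_basis_chain p (A : 'M[F]_(N, p)) i : row i A = basis_chain (enum_val i) *m A.
Proof. by rewrite basis_chainM enum_valK. Qed.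

Lemma signr_rank_swap (y z : V) : y != z ->
  (-1) ^+ (enum_rank y < enum_rank z)%N = - (-1) ^+ (enum_rank z < enum_rank y)%N :> F.
Proof.
move=> yz; have : (enum_rank y : nat) != enum_rank z.
  by apply: contra yz => /eqP/ord_inj/enum_rank_inj ->.
by case: ltngtP => // _ _; rewrite /= ?expr0 ?expr1 ?opprK.
Qed.

Lemma face_sign_setD1 (s : {set V}) y z : y \in s ->
  sgn (s :\ y) z = sgn s z * (-1) ^+ (enum_rank y < enum_rank z)%N.
Proof.
move=> ys; rewrite /face_sign (cardsD1 y [set w in s | _]) inE ys /=.
rewrite addnC exprD -mulrA mulr_sign_sq mulr1; congr (_ ^+ _); apply: eq_card => w.
by rewrite !inE andbA.
Qed.

Lemma face_sign_swap (s : {set V}) y z : y \in s -> z \in s -> y != z ->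
  sgn s y * sgn (s :\ y) z = - (sgn s z * sgn (s :\ z) y).
Proof.
move=> ys zs yz; rewrite !face_sign_setD1 // (signr_rank_swap yz).
by rewrite !mulrN mulrCA.
Qed.

Lemma face_sign_setD1_pair (s : {set V}) y z : y \in s -> z \in s -> y != z ->
  sgn (s :\ y) z * sgn (s :\ z) y = - (sgn s y * sgn s z).
Proof.
move=> ys zs yz; rewrite !face_sign_setD1 // (signr_rank_swap yz).
by rewrite mulrACA mulNr mulr_sign_sq mulrN1 mulrC.
Qed.

Lemma basis_chain_bd (s : {set V}) :
  basis_chain s *m bd = \sum_(y in s | s :\ y != set0) sgn s y *: basis_chain (s :\ y).
Proof.
apply/rowP => j; rewrite basis_chainM !mxE summxE enum_rankK; set t := enum_val j.
under eq_bigr => y _ do rewrite !mxE eqxx /= -(can2_eq enum_valK enum_rankK) -/t.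
rewrite /bd_coef; case: ifP => [/andP[/andP[tn ts] /cards1P[x sx]] | not_face].
  have /setDP[xs _] : x \in s :\: t by rewrite sx set11.
  have tx : t = s :\ x by apply/eqP; rewrite eq_setD1 // ts sx eqxx.
  rewrite (bigD1 x) /=; last by rewrite xs -tx tn.
  rewrite big1 ?addr0; last first.
    move=> y /andP[/andP[ys _] yx].
    by rewrite eq_setD1 // ts sx (inj_eq set1_inj) eq_sym (negbTE yx) mulr0.
  case: pickP => [z|/(_ x)]; last by rewrite sx set11.
  by rewrite sx => /set1P ->; rewrite -tx eqxx mulr1.
rewrite big1 // => y /andP[ys yn]; case: eqP => [ty|]; last by rewrite mulr0.
by move: not_face; rewrite ty yn subD1set setD_setD1 // cards1.
Qed.

Lemma bdmx_bdmx : bd *m bd = 0.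
Proof.
apply/row_matrixP => i; rewrite row0 row_basis_chain; set s := enum_val i.
rewrite mulmxA basis_chain_bd mulmx_suml.
under eq_bigr => y _ do rewrite -scalemxAl basis_chain_bd scaler_sumr.
rewrite big_mkcondr /=.
rewrite (eq_bigr (fun y => \sum_(z in s | (z != y) && (s :\ y :\ z != set0))
    sgn s y *: (sgn (s :\ y) z *: basis_chain (s :\ y :\ z)))); last first.
  move=> y ys; case: ifP => yn.
    by apply: eq_bigl => z; rewrite in_setD1; case: (z != y); case: (z \in s).
  move/negbFE/eqP: yn => yn; rewrite big_pred0 // => z.
  by rewrite yn set0D eqxx !andbF.
apply: sum_offdiag_antisym => [a b|a b ha hb ab]; first by rewrite !setDDl setUC.
rewrite [s :\ b :\ a]setDDl setUC -setDDl !scalerA -scaleNr.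
by congr (_ *: _); apply: face_sign_swap.
Qed.

Definition chainsmx (Q : pred {set V}) : 'M[F]_N :=
  \matrix_(i, j) ((i == j) && Q (enum_val i))%:R.

Lemma row_chainsmx Q i :
  row i (chainsmx Q) = if Q (enum_val i) then basis_chain (enum_val i) else 0.
Proof.
apply/rowP => j; rewrite !mxE; case: ifP => q; rewrite ?mxE ?andbT ?andbF //.
by rewrite enum_valK eqxx /= eq_sym.
Qed.

Lemma chainmxE (K : {set {set V}}) k :
  chainmx F K k = chainsmx (fun s => (s \in K) && (#|s| == k.+1)).
Proof. by apply/matrixP => i j; rewrite !mxE andbA. Qed.

Lemma basis_chain_sub (Q : pred {set V}) s : Q s -> (basis_chain s <= chainsmx Q)%MS.
Proof.
by move=> q; apply: (eq_row_sub (enum_rank s)); rewrite row_chainsmx enum_rankK q.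
Qed.

Lemma chainsmxM_sub (Q : pred {set V}) p (A : 'M[F]_(N, p)) m (B : 'M[F]_(m, p)) :
  (forall s, Q s -> basis_chain s *m A <= B)%MS -> (chainsmx Q *m A <= B)%MS.
Proof.
move=> sub_s; apply/row_subP => i; rewrite row_mul row_chainsmx.
by case: ifP => q; [apply: sub_s | rewrite mul0mx sub0mx].
Qed.

Lemma submx_chainsmxM (Q : pred {set V}) p (A : 'M[F]_(N, p)) m (B : 'M[F]_(m, p))
    (v : 'rV[F]_N) :
  (forall s, Q s -> basis_chain s *m A <= B)%MS -> (v <= chainsmx Q)%MS ->
  (v *m A <= B)%MS.
Proof.
by move=> sub_s /submxP[w ->]; rewrite -mulmxA mulmx_sub // chainsmxM_sub.
Qed.

Lemma chainsmxS (Q Q' : pred {set V}) :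
  (forall s, Q s -> Q' s) -> (chainsmx Q <= chainsmx Q')%MS.
Proof.
move=> QQ'; rewrite -[chainsmx Q]mulmx1; apply: chainsmxM_sub => s q.
by rewrite mulmx1 basis_chain_sub // QQ'.
Qed.

Lemma chainsmxM_eq (Q : pred {set V}) p (A B : 'M[F]_(N, p)) (v : 'rV[F]_N) :
  (forall s, Q s -> basis_chain s *m A = basis_chain s *m B) ->
  (v <= chainsmx Q)%MS -> v *m A = v *m B.
Proof.
move=> eqAB /submxP[w ->]; rewrite -!mulmxA; congr (_ *m _).
apply/row_matrixP => i; rewrite !row_mul row_chainsmx.
by case: ifP => q; [apply: eqAB | rewrite !mul0mx].
Qed.

Definition face_closed (K : {set {set V}}) : Prop :=
  forall U T : {set V}, U \in K -> T \subset U -> T != set0 -> T \in K.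

Lemma chainmxS (K K' : {set {set V}}) k :
  K \subset K' -> (chainmx F K k <= chainmx F K' k)%MS.
Proof.
move=> KK'; rewrite !chainmxE; apply: chainsmxS => U /andP[UK ->].
by rewrite (subsetP KK').
Qed.

Lemma chainmx_sub_supp (K : {set {set V}}) k : (chainmx F K k <= chainsmx (mem K))%MS.
Proof. by rewrite chainmxE; apply: chainsmxS => U /andP[]. Qed.

Lemma bdrymx_sub_supp (K : {set {set V}}) k :
  face_closed K -> (bdrymx F K k <= chainsmx (mem K))%MS.
Proof.
move=> Kface; rewrite /bdrymx chainmxE; apply: chainsmxM_sub => U /andP[UK _].
rewrite basis_chain_bd; apply: summx_sub => y /andP[yU yn]; apply: scalemx_sub.
exact/basis_chain_sub/(Kface _ _ UK (subD1set U y) yn).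
Qed.

Lemma bdrymxS (K K' : {set {set V}}) k :
  K \subset K' -> (bdrymx F K k <= bdrymx F K' k)%MS.
Proof. by move=> KK'; apply/submxMr/chainmxS. Qed.

Lemma bdmx_bdrymx (K : {set {set V}}) k (v : 'rV[F]_N) :
  (v <= bdrymx F K k)%MS -> v *m bd = 0.
Proof. by case/submxP => w ->; rewrite -!mulmxA bdmx_bdmx !mulmx0. Qed.

End SimplicialChains.

Section Persistence.
Variables (F : fieldType) (V : finType).
Local Open Scope ring_scope.
Local Notation N := #|{set V}|.
Local Notation bd := (bdmx F V).

(* H_k(W, K) = 0: a relative k-cycle of (W, K) is a k-chain of K up to a boundary. *)
Definition rel_acyclic (K W : {set {set V}}) (k : nat) : Prop :=
  forall c : 'rV[F]_N, (c <= chainmx F W k)%MS -> (c *m bd <= chainsmx F (mem K))%MS ->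
  (c <= chainmx F K k + bdrymx F W k)%MS.

Lemma cyclemx_addbdry (K W W' : {set {set V}}) k :
  K \subset W -> W \subset W' -> rel_acyclic K W k ->
  (cyclemx F W k + bdrymx F W' k :=: cyclemx F K k + bdrymx F W' k)%MS.
Proof.
move=> KW WW' acycKW; apply/eqmxP/andP; split; last first.
  apply: addsmxS => //; rewrite sub_capmx capmxSr andbT.
  exact: submx_trans (capmxSl _ _) (chainmxS _ _ KW).
rewrite addsmx_sub addsmxSr andbT; apply/row_subP => i.
have : (row i (cyclemx F W k) <= cyclemx F W k)%MS := row_sub i _.
set z := row i _; rewrite sub_capmx => /andP[zW /sub_kermxP z_cycle].
have /sub_addsmxP[[u1 u2] /= z_eq] : (z <= chainmx F K k + bdrymx F W k)%MS.
  by apply: acycKW; rewrite ?z_cycle ?sub0mx.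
rewrite z_eq; apply: addmx_sub_adds.
  rewrite sub_capmx submxMl; apply/sub_kermxP.
  by move: z_cycle; rewrite z_eq mulmxDl (bdmx_bdrymx (submxMl _ _)) addr0.
exact: submx_trans (submxMl _ _) (bdrymxS _ _ WW').
Qed.

Lemma capmx_bdrymx (K K' W' : {set {set V}}) k :
  K \subset K' -> K' \subset W' -> face_closed K' -> rel_acyclic K' W' k.+1 ->
  ((cyclemx F K k + bdrymx F K' k) :&: bdrymx F W' k :=: bdrymx F K' k)%MS.
Proof.
move=> KK' K'W' K'face acycK'W'; apply/eqmxP/andP; split; last first.
  by rewrite sub_capmx addsmxSr bdrymxS.
apply/row_subP => i; set z := row i _.
have : (z <= (cyclemx F K k + bdrymx F K' k) :&: bdrymx F W' k)%MS := row_sub i _.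
rewrite sub_capmx => /andP[z_in_K' /submxP[u z_eq]].
set w := u *m chainmx F W' k.+1; have {}z_eq : z = w *m bd by rewrite z_eq mulmxA.
rewrite z_eq.
have /sub_addsmxP[[u1 u2] /= ->] : (w <= chainmx F K' k.+1 + bdrymx F W' k.+1)%MS.
  apply: acycK'W'; first exact: submxMl.
  rewrite -z_eq; apply: submx_trans z_in_K' _; rewrite addsmx_sub bdrymx_sub_supp //.
  rewrite andbT; apply: submx_trans (capmxSl _ _) _.
  exact: submx_trans (chainmxS _ _ KK') (chainmx_sub_supp _ _ _).
by rewrite mulmxDl (bdmx_bdrymx (submxMl _ _)) addr0 -mulmxA submxMl.
Qed.

Lemma pers_dim_rel_acyclic (K K' W W' : {set {set V}}) k :
  K \subset W -> K' \subset W' -> K \subset K' -> W \subset W' -> face_closed K' ->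
  rel_acyclic K W k -> rel_acyclic K' W' k.+1 ->
  pers_dim F K K' k = pers_dim F W W' k.
Proof.
move=> KW K'W' KK' WW' K'face acycKW acycK'W'; rewrite /pers_dim.
rewrite (cyclemx_addbdry KW WW' acycKW).
have := mxrank_sum_cap (cyclemx F K k + bdrymx F K' k)%MS (bdrymx F W' k).
rewrite (capmx_bdrymx KK' K'W' K'face acycK'W') -addsmxA.
rewrite (adds_eqmx (eqmx_refl _) (addsmx_idPr (bdrymxS _ _ K'W'))).
have : (\rank (bdrymx F K' k) <= \rank (cyclemx F K k + bdrymx F K' k))%N.
  exact/mxrankS/addsmxSr.
have : (\rank (bdrymx F W' k) <= \rank (cyclemx F K k + bdrymx F W' k))%N.
  exact/mxrankS/addsmxSr.
lia.
Qed.

End Persistence.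

Section ConeContraction.
Variables (F : fieldType) (V : finType).
Local Open Scope ring_scope.
Local Notation N := #|{set V}|.
Local Notation bd := (bdmx F V).
Local Notation sgn := (face_sign F).
Local Notation chain := (basis_chain F).
Local Notation chainsmx := (chainsmx F).

Definition cone_apex (W : {set {set V}}) (Y : {set V}) (g : {set V} -> V) : Prop :=
  forall U, U \in W -> U :&: Y != set0 -> g (U :&: Y) \notin Y /\ g (U :&: Y) |: U \in W.

Variables (W : {set {set V}}) (Y : {set V}) (g : {set V} -> V).
Hypotheses (W_face : face_closed W) (g_apex : cone_apex W Y g).

Definition cone_coef (U T : {set V}) : F :=
  if (U :&: Y != set0) && (g (U :&: Y) \notin U) && (T == g (U :&: Y) |: U)
  then sgn T (g (U :&: Y)) else 0.

Definition conemx : 'M[F]_N := \matrix_(i, j) cone_coef (enum_val i) (enum_val j).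

Definition cone_homotopy : 'M[F]_N := conemx *m bd + bd *m conemx.

Definition pushmx : 'M[F]_N := 1%:M - cone_homotopy.

Definition level (j n : nat) : pred {set V} :=
  fun U => [&& U \in W, (#|U :&: Y| <= j)%N & #|U| == n].

Lemma conemx_basis U : chain U *m conemx =
  if (U :&: Y != set0) && (g (U :&: Y) \notin U)
  then sgn (g (U :&: Y) |: U) (g (U :&: Y)) *: chain (g (U :&: Y) |: U) else 0.
Proof.
rewrite basis_chainM; case: ifP => c; apply/rowP => j.
  rewrite !mxE enum_rankK /cone_coef c /=.
  rewrite (can2_eq enum_valK enum_rankK).
  by case: eqP => [->|_]; rewrite ?enum_rankK ?mulr1 ?mulr0.
by rewrite !mxE enum_rankK /cone_coef c.
Qed.

Lemma conemx_free U : U :&: Y = set0 -> chain U *m conemx = 0.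
Proof. by move=> U0; rewrite conemx_basis U0 eqxx. Qed.

Lemma conemx_level U : U \in W ->
  (chain U *m conemx <= chainsmx (level #|(U :&: Y)%SET| #|U|.+1))%MS.
Proof.
move=> UW; rewrite conemx_basis; case: ifP => [/andP[ne xU]|_]; last exact: sub0mx.
have [xY xUW] := g_apex UW ne.
apply/scalemx_sub/basis_chain_sub; rewrite /level xUW setU1I_notin // leqnn.
by rewrite cardsU1 xU add1n eqxx.
Qed.

Lemma conemx_face_level U y : U \in W -> y \in U -> y \in Y -> U :\ y != set0 ->
  (chain (U :\ y) *m conemx <= chainsmx (level (#|(U :&: Y)%SET|).-1 #|U|))%MS.
Proof.
move=> UW yU yY yn; have UyW : U :\ y \in W := W_face UW (subD1set U y) yn.
have -> : (#|U :&: Y|).-1 = #|(U :\ y) :&: Y| by rewrite setIDAC cardsD1_pred // inE yU.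
have -> : #|U| = #|U :\ y|.+1.
  by rewrite cardsD1_pred // prednK // card_gt0; apply/set0Pn; exists y.
exact: conemx_level.
Qed.

Lemma cone_homotopy_basis U : chain U *m cone_homotopy =
  chain U *m conemx *m bd +
  \sum_(y in U | U :\ y != set0) sgn U y *: (chain (U :\ y) *m conemx).
Proof.
rewrite mulmxDr !mulmxA basis_chain_bd mulmx_suml; congr (_ + _).
by apply: eq_bigr => y _; rewrite scalemxAl.
Qed.

Lemma pushmx_free U : U :&: Y = set0 -> chain U *m pushmx = chain U.
Proof.
move=> U0; rewrite mulmxBr mulmx1 cone_homotopy_basis conemx_free // mul0mx add0r.
by rewrite big1 ?subr0 // => y _; rewrite conemx_free ?scaler0 // setIDAC U0 set0D.
Qed.

Lemma pushmx_level_apex_in U : U \in W -> U :&: Y != set0 -> g (U :&: Y) \in U ->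
  (chain U *m pushmx <= chainsmx (level (#|(U :&: Y)%SET|).-1 #|U|))%MS.
Proof.
move=> UW ne xU; set x := g (U :&: Y) in xU.
have [xY _] := g_apex UW ne.
have Uxne : U :\ x != set0.
  by rewrite -(setD1I_notin U xY) in ne; exact: subset_neq0 (subsetIl _ _) ne.
rewrite mulmxBr mulmx1 cone_homotopy_basis conemx_basis -/x xU andbF mul0mx add0r.
rewrite (bigD1 x) /=; last by rewrite xU Uxne.
rewrite conemx_basis setD1I_notin // ne -/x setD1K // !inE eqxx /=.
rewrite scalerA mulr_sign_sq scale1r opprD addNKr eqmx_opp.
apply: summx_sub => y /andP[/andP[yU yn] yx].
have [yY|yY] := boolP (y \in Y); first exact/scalemx_sub/conemx_face_level.
by rewrite conemx_basis setD1I_notin // ne -/x !inE xU andbT eq_sym yx scaler0 sub0mx.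
Qed.

Lemma pushmx_level_apex_out U : U \in W -> U :&: Y != set0 -> g (U :&: Y) \notin U ->
  (chain U *m pushmx <= chainsmx (level (#|(U :&: Y)%SET|).-1 #|U|))%MS.
Proof.
move=> UW ne xU; set x := g (U :&: Y) in xU.
have [xY xUW] := g_apex UW ne.
have U_gt0 : (0 < #|U|)%N by rewrite card_gt0; apply: subset_neq0 (subsetIl U Y) ne.
have xU_faces y : y \in x |: U -> (x |: U) :\ y != set0.
  case: (eqVneq y x) => [-> _|yx _]; first by rewrite setU1K // -card_gt0.
  by apply/set0Pn; exists x; rewrite !inE eqxx eq_sym yx.
have bd_cone : chain (x |: U) *m bd =
    \sum_(y in x |: U) sgn (x |: U) y *: chain ((x |: U) :\ y).
  by rewrite basis_chain_bd; apply: eq_bigl => y; apply: andb_idr; apply: xU_faces.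
rewrite mulmxBr mulmx1 cone_homotopy_basis conemx_basis -/x ne xU /=.
rewrite -scalemxAl bd_cone big_setU1 //= setU1K // scalerDr scalerA mulr_sign_sq scale1r.
rewrite -addrA opprD addNKr eqmx_opp scaler_sumr big_mkcondr /= -big_split /=.
apply: summx_sub => y yU; have xy : x != y by apply: contraNneq xU => ->.
have [yY|yY] := boolP (y \in Y).
  apply: addmx_sub; last first.
    by case: ifP => yn; [exact/scalemx_sub/conemx_face_level | exact: sub0mx].
  apply/scalemx_sub/scalemx_sub/basis_chain_sub; apply/and3P; split.
  - exact: W_face xUW (subD1set _ _) (xU_faces _ (setU1r x yU)).
  - by rewrite setD1U1 // setU1I_notin // setIDAC cardsD1_pred // inE yU.
  rewrite setD1U1 // cardsU1 !inE (negbTE xU) andbF cardsD1_pred //.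
  by rewrite add1n prednK.
have yn : U :\ y != set0.
  by rewrite -(setD1I_notin U yY) in ne; exact: subset_neq0 (subsetIl _ _) ne.
rewrite yn conemx_basis setD1I_notin // ne -/x !inE (negbTE xU) andbF /=.
have := face_sign_setD1_pair F (setU11 x U) (setU1r x yU) xy.
rewrite setU1K // setD1U1 // => pair_sign.
by rewrite !scalerA -scalerDl pair_sign addrN scale0r sub0mx.
Qed.

Lemma pushmx_level j n : (chainsmx (level j n) *m pushmx <= chainsmx (level j.-1 n))%MS.
Proof.
apply: chainsmxM_sub => U /and3P[UW UYj /eqP <-].
have [U0|ne] := eqVneq (U :&: Y) set0.
  by rewrite pushmx_free //; apply: basis_chain_sub; rewrite /level UW U0 cards0 eqxx.
have lower : (chain U *m pushmx <= chainsmx (level (#|(U :&: Y)%SET|).-1 #|U|))%MS.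
  by have [xU|xU] := boolP (g (U :&: Y) \in U);
    [apply: pushmx_level_apex_in | apply: pushmx_level_apex_out].
apply: submx_trans lower _; apply: chainsmxS => T; rewrite /level => /and3P[-> TY ->] /=.
by rewrite andbT (leq_trans TY) // -!subn1 leq_sub2r.
Qed.

Lemma level_mono j j' n :
  (j <= j')%N -> (chainsmx (level j n) <= chainsmx (level j' n))%MS.
Proof.
move=> jj'; apply: chainsmxS => U; rewrite /level => /and3P[-> Uj ->].
by rewrite (leq_trans Uj jj').
Qed.

Lemma bdmx_pushmx : bd *m pushmx = pushmx *m bd.
Proof.
rewrite mulmxBr mulmxBl mulmx1 mul1mx !mulmxDr !mulmxDl !mulmxA bdmx_bdmx mul0mx.
by rewrite -!mulmxA bdmx_bdmx !mulmx0 add0r addr0.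
Qed.

Local Notation Kfree := [set U in W | U :&: Y == set0].

Lemma pushmx_free_chain (v : 'rV[F]_N) :
  (v <= chainsmx (mem Kfree))%MS -> v *m pushmx = v.
Proof.
move=> v_free; rewrite -[RHS]mulmx1; apply: chainsmxM_eq v_free => U.
by rewrite !inE mulmx1 => /andP[_ /eqP /pushmx_free].
Qed.

Lemma conemx_free_chain (v : 'rV[F]_N) :
  (v <= chainsmx (mem Kfree))%MS -> v *m conemx = 0.
Proof.
move=> v_free; rewrite -(mulmx0 N v); apply: chainsmxM_eq v_free => U.
by rewrite !inE mulmx0 => /andP[_ /eqP /conemx_free].
Qed.

Lemma rel_acyclic_cone k : rel_acyclic F Kfree W k.
Proof.
move=> c cW c_bd; set n := #|V|.
pose push i := iter i (fun w => w *m pushmx) c.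
have c_top : (c <= chainsmx (level n k.+1))%MS.
  apply: submx_trans cW _; rewrite chainmxE; apply: chainsmxS => U /andP[UW sU].
  by rewrite /level UW sU max_card.
have push_level i : (push i <= chainsmx (level (n - i) k.+1))%MS.
  elim: i => [|i IH]; first by rewrite subn0.
  by rewrite subnS; apply: submx_trans (pushmx_level _ _); apply: submxMr.
have push_telescope i : c - push i = (\sum_(j < i) push j) *m cone_homotopy.
  elim: i => [|i IH]; first by rewrite big_ord0 mul0mx subrr.
  rewrite big_ord_recr /= mulmxDl -IH mulmxBr mulmx1.
  by rewrite opprB addrA addrAC.
have push_bd i : push i *m bd = c *m bd.
  elim: i => [//|i IH]; rewrite [push i.+1]/= -mulmxA -bdmx_pushmx mulmxA IH.
  exact: pushmx_free_chain.
set y := \sum_(j < n) push j.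
(* c - push n = y h d + y d h, and y d is a multiple of c d, a chain of Kfree. *)
have c_eq : c = push n + (y *m conemx) *m bd.
  apply/eqP; rewrite -subr_eq0 opprD addrA push_telescope -/y mulmxDr !mulmxA.
  rewrite -[X in _ + X - _]mulmxA [X in _ + X - _](_ : _ = 0) ?addr0 ?subrr //.
  rewrite mulmx_suml; apply: big1 => j _; rewrite mulmxA push_bd.
  exact: conemx_free_chain.
rewrite c_eq; apply: addmx_sub_adds.
  apply: submx_trans (push_level n) _; rewrite subnn chainmxE; apply: chainsmxS => U.
  by rewrite /level inE leqn0 cards_eq0 => /and3P[-> -> ->].
apply: submxMr; apply: (submx_chainsmxM (Q := level n k.+1)).
  move=> U /and3P[UW _ /eqP sU]; apply: submx_trans (conemx_level UW) _.
  by rewrite chainmxE; apply: chainsmxS => T; rewrite sU => /and3P[-> _ ->].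
apply: summx_sub => j _; apply: submx_trans (push_level j) _.
exact/level_mono/leq_subr.
Qed.

End ConeContraction.

Lemma pers_dim_cone (F : fieldType) (V : finType) (W W' : {set {set V}}) (Y : {set V})
    (g g' : {set V} -> V) k :
  face_closed W -> face_closed W' -> cone_apex W Y g -> cone_apex W' Y g' ->
  W \subset W' ->
  pers_dim F [set U in W | U :&: Y == set0] [set U in W' | U :&: Y == set0] k =
  pers_dim F W W' k.
Proof.
move=> Wface W'face gW g'W' WW'.
apply: (pers_dim_rel_acyclic _ _ _ WW' _ (rel_acyclic_cone (k := k) Wface gW)
  (rel_acyclic_cone (k := k.+1) W'face g'W')).
- by apply/subsetP => U; rewrite inE => /andP[].
- by apply/subsetP => U; rewrite inE => /andP[].
- by apply/subsetP => U; rewrite !inE => /andP[UW ->]; rewrite (subsetP WW').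
move=> U T; rewrite !inE => /andP[UW /eqP U0] TU Tn; rewrite (W'face U) //=.
by rewrite -subset0 -U0 setSI.
Qed.

Section Relabel.
Variables (F : fieldType) (V1 V2 : finType) (f : V1 -> V2).
(* [f] must preserve the vertex order, which orients simplices in [face_sign]. *)
Hypotheses (f_inj : injective f)
  (f_mono : forall x y, (enum_rank (f x) < enum_rank (f y))%N = (enum_rank x < enum_rank y)%N).
Local Open Scope ring_scope.
Local Notation N1 := #|{set V1}|.
Local Notation N2 := #|{set V2}|.
Local Notation im K := [set f @: (s : {set V1}) | s in K].

Lemma imsetD1 (s : {set V1}) y : f @: (s :\ y) = (f @: s) :\ f y.
Proof.
apply/setP => z; rewrite !inE; apply/imsetP/andP => [[w] |[zy /imsetP[w ws zE]]].
  by rewrite !inE => /andP[wy ws] ->; rewrite (inj_eq f_inj) wy imset_f.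
by exists w; rewrite // !inE ws andbT; apply: contraNneq zy => wy; rewrite zE wy.
Qed.

Lemma face_sign_imset (s : {set V1}) y : face_sign F (f @: s) (f y) = face_sign F s y.
Proof.
rewrite /face_sign; congr (_ ^+ _).
have -> : [set w in f @: s | (enum_rank w < enum_rank (f y))%N] =
          f @: [set w in s | (enum_rank w < enum_rank y)%N].
  apply/setP => z; rewrite !inE; apply/andP/imsetP => [[/imsetP[w ws ->] lt]|[w]].
    by exists w; rewrite // inE ws -f_mono.
  by rewrite inE => /andP[ws lt] ->; rewrite imset_f // f_mono.
by rewrite card_imset.
Qed.

Definition relabelmx : 'M[F]_(N1, N2) :=
  \matrix_(i, j) (f @: (enum_val i : {set V1}) == enum_val j)%:R.

Lemma relabelmx_basis s : basis_chain F s *m relabelmx = basis_chain F (f @: s).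
Proof.
apply/rowP => j; rewrite basis_chainM !mxE enum_rankK eqxx /=.
by rewrite -(can2_eq enum_valK enum_rankK) eq_sym.
Qed.

Lemma relabelmx_free : row_free relabelmx.
Proof.
apply/row_freeP; exists (\matrix_(j, i) (enum_val j == f @: (enum_val i : {set V1}))%:R).
apply/row_matrixP => i; rewrite row_mul !row_basis_chain mulmx1 relabelmx_basis.
apply/rowP => i'; rewrite basis_chainM !mxE enum_rankK.
by rewrite (inj_eq (imset_inj f_inj)) eqxx enum_valK (inj_eq enum_val_inj) eq_sym.
Qed.

Lemma bdmx_relabelmx : bdmx F V1 *m relabelmx = relabelmx *m bdmx F V2.
Proof.
apply/row_matrixP => i; rewrite !row_mul !row_basis_chain; set s := enum_val i.
rewrite relabelmx_basis !basis_chain_bd mulmx_suml.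
rewrite big_imset_cond /=; last by move=> a b _ _; apply: f_inj.
apply: eq_big => [y|y /andP[ys _]]; first by rewrite -imsetD1 imset_eq0.
by rewrite -scalemxAl relabelmx_basis face_sign_imset imsetD1.
Qed.

Lemma chainmx_imset (K : {set {set V1}}) k :
  (chainmx F (im K) k :=: chainmx F K k *m relabelmx)%MS.
Proof.
apply/eqmxP/andP; split; rewrite !chainmxE.
  rewrite -[chainsmx _ _]mulmx1; apply: chainsmxM_sub => t /andP[/imsetP[s sK ->] st].
  rewrite mulmx1 -relabelmx_basis; apply/submxMr/basis_chain_sub.
  by rewrite sK -(card_imset s f_inj).
apply: chainsmxM_sub => s /andP[sK sk]; rewrite relabelmx_basis.
by apply: basis_chain_sub; rewrite imset_f // card_imset.
Qed.

Lemma bdrymx_imset (L : {set {set V1}}) k :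
  (bdrymx F (im L) k :=: bdrymx F L k *m relabelmx)%MS.
Proof.
by have := eqmxMr (bdmx F V2) (chainmx_imset L k.+1); rewrite -mulmxA -bdmx_relabelmx mulmxA.
Qed.

Lemma cyclemx_imset (K : {set {set V1}}) k :
  (cyclemx F (im K) k :=: cyclemx F K k *m relabelmx)%MS.
Proof.
apply/eqmxP/andP; split; last first.
  rewrite sub_capmx (chainmx_imset K k) submxMr ?capmxSl //=; apply/sub_kermxP.
  by rewrite -mulmxA -bdmx_relabelmx mulmxA (sub_kermxP (capmxSr _ _)) mul0mx.
apply/row_subP => i; set v := row i _.
have : (v <= cyclemx F (im K) k)%MS := row_sub i _.
rewrite sub_capmx (chainmx_imset K k) => /andP[/submxP[D]].
rewrite mulmxA => v_eq /sub_kermxP v_cycle.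
rewrite v_eq; apply/submxMr; rewrite sub_capmx submxMl; apply/sub_kermxP.
apply: (row_free_inj relabelmx_free).
by rewrite mul0mx -mulmxA bdmx_relabelmx mulmxA -v_eq.
Qed.

Lemma pers_dim_imset (K L : {set {set V1}}) k :
  pers_dim F (im K) (im L) k = pers_dim F K L k.
Proof.
rewrite /pers_dim (adds_eqmx (cyclemx_imset K k) (bdrymx_imset L k)) -addsmxMr.
by rewrite (bdrymx_imset L k) !(mxrankMfree _ relabelmx_free).
Qed.

End Relabel.

Section RelabelSum.
Variables T1 T2 : finType.

Lemma pers_dim_inl (F : fieldType) (K L : {set {set T1}}) k :
  pers_dim F [set @inl T1 T2 @: (s : {set T1}) | s in K]
    [set @inl T1 T2 @: (s : {set T1}) | s in L] k =
  pers_dim F K L k.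
Proof. by apply: pers_dim_imset => [a b []|x y]; rewrite ?enum_rank_inl. Qed.

Lemma pers_dim_inr (F : fieldType) (K L : {set {set T2}}) k :
  pers_dim F [set @inr T1 T2 @: (s : {set T2}) | s in K]
    [set @inr T1 T2 @: (s : {set T2}) | s in L] k =
  pers_dim F K L k.
Proof. by apply: pers_dim_imset => [a b []|x y]; rewrite ?enum_rank_inr ?ltn_add2l. Qed.

End RelabelSum.

Section JoinComplex.
Variables (X : finType) (M : nat) (P : 'I_M -> {set {set X}}).
Local Notation A := ('I_M * {set X})%type.
Local Notation V := (X + A)%type.

Definition clust_rel (m : nat) (x : X) (a : A) : bool :=
  [&& (a.1 < m)%N, a.2 \in P a.1 & x \in a.2].

Definition join_complex (m : nat) : {set {set V}} :=
  [set U : {set V} | (U != set0) && [exists x0, exists a0, [&& clust_rel m x0 a0,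
     [forall y, (inl y \in U) ==> clust_rel m y a0],
     [forall b, (inr b \in U) ==> clust_rel m x0 b] &
     [forall y, forall b, (inl y \in U) && (inr b \in U) ==> clust_rel m y b]]]].

Lemma join_complexP m U : reflect (U != set0 /\ exists x0 a0, [/\ clust_rel m x0 a0,
    forall y, inl y \in U -> clust_rel m y a0,
    forall b, inr b \in U -> clust_rel m x0 b &
    forall y b, inl y \in U -> inr b \in U -> clust_rel m y b])
  (U \in join_complex m).
Proof.
rewrite inE; apply: (iffP andP) => [[Un /existsP[x0 /existsP[a0]]]|[Un [x0 [a0 []]]]].
  move=> /and4P[r /forallP H1 /forallP H2 /forallP H3]; split=> //; exists x0, a0.
  split=> // [y|b|y b yU bU]; [exact/implyP/H1 | exact/implyP/H2 |].
  by move/forallP/(_ b)/implyP: (H3 y); apply; rewrite yU bU.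
move=> r H1 H2 H3; split=> //; apply/existsP; exists x0; apply/existsP; exists a0.
apply/and4P; split=> //; apply/forallP => y; first exact/implyP/H1.
  exact/implyP/H2.
by apply/forallP => b; apply/implyP => /andP[]; apply: H3.
Qed.

Lemma join_complex_face m : face_closed (join_complex m).
Proof.
move=> U T /join_complexP[_ [x0 [a0 [r H1 H2 H3]]]] TU Tn; apply/join_complexP.
split=> //; exists x0, a0; split=> // [y yT|b bT|y b yT bT].
- exact: H1 (subsetP TU _ yT).
- exact: H2 (subsetP TU _ bT).
- exact: H3 (subsetP TU _ yT) (subsetP TU _ bT).
Qed.

Lemma clust_rel_mono m m' x a : (m <= m')%N -> clust_rel m x a -> clust_rel m' x a.
Proof. by move=> mm' /and3P[lt_m aP xa]; rewrite /clust_rel aP xa (leq_trans lt_m mm'). Qed.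

Lemma join_complex_mono m m' : (m <= m')%N -> join_complex m \subset join_complex m'.
Proof.
move=> mm'; apply/subsetP => U /join_complexP[Un [x0 [a0 [r H1 H2 H3]]]].
apply/join_complexP; split=> //; exists x0, a0.
split=> [|y yU|b bU|y b yU bU]; apply: clust_rel_mono mm' _; [exact: r|exact: H1|exact: H2|].
exact: H3.
Qed.

Definition is_inl (v : V) : bool := if v is inl _ then true else false.
Definition point_vertices : {set V} := [set v | is_inl v].
Definition cluster_vertices : {set V} := [set v | ~~ is_inl v].

Lemma inl_preimK (U : {set V}) :
  U :&: cluster_vertices = set0 -> @inl X A @: [set x | inl x \in U] = U.
Proof.
move=> U0; apply/setP => -[y|b]; first by rewrite mem_imset ?inE // => ? ? [].
have : inr b \notin U :&: cluster_vertices by rewrite U0 inE.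
by rewrite !inE /= andbT => /negbTE ->; apply/negbTE/negP => /imsetP[].
Qed.

Lemma inr_preimK (U : {set V}) :
  U :&: point_vertices = set0 -> @inr X A @: [set a | inr a \in U] = U.
Proof.
move=> U0; apply/setP => -[y|b]; last by rewrite mem_imset ?inE // => ? ? [].
have : inl y \notin U :&: point_vertices by rewrite U0 inE.
by rewrite !inE /= andbT => /negbTE ->; apply/negbTE/negP => /imsetP[].
Qed.

Lemma imset_inl_clusters (s : {set X}) : (@inl X A @: s) :&: cluster_vertices = set0.
Proof. by apply/setP => v; rewrite !inE; apply/negbTE/andP => -[/imsetP[y _ ->]]. Qed.

Lemma imset_inr_points (S : {set A}) : (@inr X A @: S) :&: point_vertices = set0.
Proof. by apply/setP => v; rewrite !inE; apply/negbTE/andP => -[/imsetP[a _ ->]]. Qed.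

Lemma join_complex_points m :
  [set U in join_complex m | U :&: cluster_vertices == set0] =
  [set @inl X A @: (s : {set X}) | s in MCF P m].
Proof.
apply/setP => U; rewrite inE; apply/andP/imsetP => [[UW /eqP U0]|[s sF ->]].
  case/join_complexP: UW => Un [x0 [a0 [r H1 _ _]]].
  exists [set x | inl x \in U]; last by rewrite inl_preimK.
  rewrite inE -(imset_eq0 (@inl X A)) inl_preimK // Un /=.
  case/and3P: r => lt_m a0P _; apply/existsP; exists a0.1; rewrite lt_m /=.
  apply/existsP; exists a0.2; rewrite a0P /=; apply/subsetP => y.
  by rewrite inE => /H1/and3P[].
move: sF; rewrite inE => /andP[sn /existsP[l /andP[lt_m /existsP[C /andP[CP sC]]]]].
split; last by rewrite imset_inl_clusters.
have [x0 x0s] := set0Pn _ sn.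
have rel_s y : y \in s -> clust_rel m y (l, C).
  by move=> ys; rewrite /clust_rel lt_m CP (subsetP sC).
apply/join_complexP; split; first by rewrite imset_eq0.
exists x0, (l, C); split=> [|y /imsetP[y' y's [->]]|b /imsetP[]|y b _ /imsetP[]] //.
  exact: rel_s.
exact: rel_s.
Qed.

Lemma join_complex_clusters m :
  [set U in join_complex m | U :&: point_vertices == set0] =
  [set @inr X A @: (S : {set A}) | S in MCN P m].
Proof.
apply/setP => U; rewrite inE; apply/andP/imsetP => [[UW /eqP U0]|[S SN ->]].
  case/join_complexP: UW => Un [x0 [_ [_ _ H2 _]]].
  exists [set a | inr a \in U]; last by rewrite inr_preimK.
  rewrite inE -(imset_eq0 (@inr X A)) inr_preimK // Un /=.
  apply/andP; split; first by apply/forall_inP => a; rewrite inE => /H2/and3P[-> ->].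
  by apply/existsP; exists x0; apply/forall_inP => a; rewrite inE => /H2/and3P[].
move: SN; rewrite inE => /and3P[Sn /forall_inP S_cl /existsP[x0 /forall_inP S_x0]].
split; last by rewrite imset_inr_points.
have [a0 a0S] := set0Pn _ Sn.
have rel_S b : b \in S -> clust_rel m x0 b.
  by move=> bS; case/andP: (S_cl _ bS) => lt_m bP; rewrite /clust_rel lt_m bP S_x0.
apply/join_complexP; split; first by rewrite imset_eq0.
exists x0, a0; split=> [|y /imsetP[]|b /imsetP[b' b'S [->]]|y b /imsetP[]] //.
  exact: rel_S.
exact: rel_S.
Qed.

(* [d] is a junk value: on simplices of [join_complex m] meeting the clusters,
   [pick] always succeeds. *)
Definition point_apex (d : V) (m : nat) (S : {set V}) : V :=
  if [pick x | [forall b, (inr b \in S) ==> clust_rel m x b]] is Some x then inl x else d.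

Definition cluster_apex (d : V) (m : nat) (S : {set V}) : V :=
  if [pick a | [forall y, (inl y \in S) ==> clust_rel m y a]] is Some a then inr a else d.

Lemma cone_apex_points d m :
  cone_apex (join_complex m) cluster_vertices (point_apex d m).
Proof.
move=> U /join_complexP[_ [x0 [_ [_ _ H2 H3]]]] ne.
rewrite /point_apex; case: pickP => [x /forallP x_rel|/(_ x0)/negP[]]; last first.
  by apply/forallP => b; apply/implyP; rewrite !inE /= andbT => /H2.
have rel_x b : inr b \in U -> clust_rel m x b.
  by move=> bU; apply: (implyP (x_rel b)); rewrite !inE bU.
have [b0 b0U] : exists b0, inr b0 \in U.
  by case/set0Pn: ne => -[y|b]; rewrite !inE /= ?andbF // andbT => bU; exists b.
split; first by rewrite inE.
apply/join_complexP; split; first by apply/set0Pn; exists (inl x); rewrite !inE eqxx.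
exists x, b0; split; first exact: rel_x.
- by move=> y; rewrite !inE => /orP[/eqP [->]|yU]; [apply: rel_x | apply: H3 yU b0U].
- by move=> b; rewrite !inE => /orP[/eqP //|bU]; apply: rel_x.
move=> y b; rewrite !inE => /orP[/eqP [->]|yU] /orP[/eqP //|bU]; first exact: rel_x.
exact: H3.
Qed.

Lemma cone_apex_clusters d m :
  cone_apex (join_complex m) point_vertices (cluster_apex d m).
Proof.
move=> U /join_complexP[_ [_ [a0 [_ H1 _ H3]]]] ne.
rewrite /cluster_apex; case: pickP => [a /forallP a_rel|/(_ a0)/negP[]]; last first.
  by apply/forallP => y; apply/implyP; rewrite !inE /= andbT => /H1.
have rel_a y : inl y \in U -> clust_rel m y a.
  by move=> yU; apply: (implyP (a_rel y)); rewrite !inE yU.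
have [y0 y0U] : exists y0, inl y0 \in U.
  by case/set0Pn: ne => -[y|b]; rewrite !inE /= ?andbF // andbT => yU; exists y.
split; first by rewrite inE.
apply/join_complexP; split; first by apply/set0Pn; exists (inr a); rewrite !inE eqxx.
exists y0, a; split; first exact: rel_a.
- by move=> y; rewrite !inE => /orP[/eqP //|yU]; apply: rel_a.
- by move=> b; rewrite !inE => /orP[/eqP [->]|bU]; [apply: rel_a | apply: H3 y0U bU].
move=> y b; rewrite !inE => /orP[/eqP //|yU] /orP[/eqP [->]|bU]; first exact: rel_a.
exact: H3.
Qed.

Lemma pers_dim_MCF_join_complex (F : fieldType) (d : V) k m m' : (m <= m')%N ->
  pers_dim F (MCF P m) (MCF P m') k = pers_dim F (join_complex m) (join_complex m') k.
Proof.
move=> mm'; rewrite -(@pers_dim_inl X A) -!join_complex_points.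
apply: (pers_dim_cone F k (@join_complex_face m) (@join_complex_face m')
  (@cone_apex_points d m) (@cone_apex_points d m') (join_complex_mono mm')).
Qed.

Lemma pers_dim_MCN_join_complex (F : fieldType) (d : V) k m m' : (m <= m')%N ->
  pers_dim F (MCN P m) (MCN P m') k = pers_dim F (join_complex m) (join_complex m') k.
Proof.
move=> mm'; rewrite -(@pers_dim_inr X A) -!join_complex_clusters.
apply: (pers_dim_cone F k (@join_complex_face m) (@join_complex_face m')
  (@cone_apex_clusters d m) (@cone_apex_clusters d m') (join_complex_mono mm')).
Qed.

End JoinComplex.

Theorem proposition7 (F : fieldType) (X : finType) (M : nat)
  (P : 'I_M -> {set {set X}})
  (hP : forall l : 'I_M, partition (P l) [set: X])
  (k m p : nat) (hm : (1 <= m)%N) (hmp : (m + p <= M)%N) :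
  pers_dim F (MCN P m) (MCN P (m + p)) k = pers_dim F (MCF P m) (MCF P (m + p)) k.
Proof.
have M_gt0 : (0 < M)%N := leq_trans hm (leq_trans (leq_addr p m) hmp).
pose d : X + ('I_M * {set X}) := inr (Ordinal M_gt0, set0).
have m_le : (m <= m + p)%N := leq_addr p m.
by rewrite (pers_dim_MCN_join_complex P F d k m_le) (pers_dim_MCF_join_complex P F d k m_le).
Qed.
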